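(* For $R_1,R_2\in\mathrm{DGRings}^{0,-1}$, the category $\mathrm{Corr}_{\mathrm{adm}}(R_1,R_2)$ is a groupoid.
   Context: Rings are commutative and unital. $\mathrm{DGRings}^{0,-1}$ is the category of commutative DG rings $R$ with $R^i=0$ for $i\ne 0,-1$. Equivalently, such $R$ is a ring $R^0$, an $R^0$-module $R^{-1}$ and an $R^0$-linear $d:R^{-1}\to R^0$ with $d(x)y=d(y)x$. A morphism is a quasi-isomorphism if it induces isomorphisms on $\ker d$ and $\operatorname{coker} d$. A correspondence from $R_1$ to $R_2$ is a diagram $R_1\xleftarrow{f}R_{12}\xrightarrow{g}R_2$ in $\mathrm{DGRings}^{0,-1}$. A morphism from it to $R_1\xleftarrow{f'}R'_{12}\xrightarrow{g'}R_2$ is a morphism $h:R_{12}\to R'_{12}$ with $f'h=f$, $g'h=g$. The correspondence is admissible if $f$ is a quasi-isomorphism and the map $R_{12}^{-1}\to R_1^{-1}\times R_2^{-1}$ is an isomorphism. $\mathrm{Corr}_{\mathrm{adm}}(R_1,R_2)$ is the full subcategory of admissible correspondences. *)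

From HB Require Import structures.
From mathcomp Require Import all_boot all_order all_algebra.
Set Implicit Arguments.
Unset Strict Implicit. Unset Printing Implicit Defensive.
Import GRing.Theory.
Local Open Scope ring_scope.

(* A commutative DG ring concentrated in degrees 0 and -1:
   a commutative unital ring R^0 (zero ring allowed), an R^0-module R^{-1},
   and an R^0-linear d : R^{-1} -> R^0 with d(x) y = d(y) x. *)
Record DGR01 := {
  R0 : comPzRingType;
  R1 : lmodType R0;
  dd : R1 -> R0;
  dd_add : forall x y : R1, dd (x + y) = dd x + dd y;
  dd_scale : forall (r : R0) (x : R1), dd (r *: x) = r * dd x;
  dd_sym : forall x y : R1, dd x *: y = dd y *: x
}.
Arguments dd : clear implicits.

Record DGHom (R S : DGR01) := {
  hom0 : R0 R -> R0 S;
  hom1 : R1 R -> R1 S;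
  hom0_one : hom0 1 = 1;
  hom0_add : forall a b, hom0 (a + b) = hom0 a + hom0 b;
  hom0_mul : forall a b, hom0 (a * b) = hom0 a * hom0 b;
  hom1_add : forall x y, hom1 (x + y) = hom1 x + hom1 y;
  hom1_scale : forall (r : R0 R) x, hom1 (r *: x) = hom0 r *: hom1 x;
  hom_dd : forall x, dd S (hom1 x) = hom0 (dd R x)
}.

Definition DGHom_eq (R S : DGR01) (f g : DGHom R S) : Prop :=
  (forall a, hom0 f a = hom0 g a) /\ (forall x, hom1 f x = hom1 g x).

Definition DGHom_comp (R S T : DGR01) (g : DGHom S T) (f : DGHom R S) :
  DGHom R T.
Proof.
refine (@Build_DGHom R T (fun a => hom0 g (hom0 f a))
                         (fun x => hom1 g (hom1 f x)) _ _ _ _ _ _).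
- by rewrite !hom0_one.
- by move=> a b; rewrite !hom0_add.
- by move=> a b; rewrite !hom0_mul.
- by move=> x y; rewrite !hom1_add.
- by move=> r x; rewrite !hom1_scale.
- by move=> x; rewrite !hom_dd.
Defined.

Definition DGHom_id (R : DGR01) : DGHom R R.
Proof.
by refine (@Build_DGHom R R (fun a => a) (fun x => x) _ _ _ _ _ _).
Defined.

(* Quasi-isomorphism: the induced maps on H^{-1} = ker d and
   H^0 = coker d = R^0 / im d are bijective (written out explicitly). *)
Definition quasi_iso (R S : DGR01) (f : DGHom R S) : Prop :=
  (forall x : R1 R, dd R x = 0 -> hom1 f x = 0 -> x = 0) /\
  (forall y : R1 S, dd S y = 0 -> exists x : R1 R, dd R x = 0 /\ hom1 f x = y) /\
  (* H^0: injective *)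
  (forall r : R0 R, (exists y : R1 S, hom0 f r = dd S y) ->
                    exists x : R1 R, r = dd R x) /\
  (forall s : R0 S, exists (r : R0 R) (y : R1 S), s = hom0 f r + dd S y).

Record Corr (A B : DGR01) := {
  apex : DGR01;
  cleft : DGHom apex A;
  cright : DGHom apex B
}.

Definition admissible (A B : DGR01) (C : Corr A B) : Prop :=
  quasi_iso (cleft C) /\
  bijective (fun x : R1 (apex C) => (hom1 (cleft C) x, hom1 (cright C) x)).

Definition corr_mor (A B : DGR01) (C C' : Corr A B) (h : DGHom (apex C) (apex C'))
  : Prop :=
  DGHom_eq (DGHom_comp (cleft C') h) (cleft C) /\
  DGHom_eq (DGHom_comp (cright C') h) (cright C).

From HB Require Import structures.
From mathcomp Require Import all_boot all_order all_algebra.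
Set Implicit Arguments.
Unset Strict Implicit.
Import GRing.Theory.
Local Open Scope ring_scope.

(* Both apexes have degree -1 part identified with A^{-1} x B^{-1}, compatibly
   with h, so h is bijective in degree -1.  Since f' h = f with f, f'
   quasi-isomorphisms, a diagram chase through ker d and coker d shows that h
   is bijective in degree 0 as well.  The set-theoretic inverse of a DG ring
   morphism is again one, and it automatically commutes with the legs. *)

Lemma raddf0_of_morphD (U V : zmodType) (f : U -> V) :
  {morph f : x y / x + y} -> f 0 = 0.
Proof. by move=> fD; apply: (addrI (f 0)); rewrite -fD !addr0. Qed.

Lemma raddfB_of_morphD (U V : zmodType) (f : U -> V) :
  {morph f : x y / x + y} -> {morph f : x y / x - y}.
Proof.
move=> fD x y; rewrite fD; congr (_ + _).
by apply: (addrI (f y)); rewrite -fD !subrr raddf0_of_morphD.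
Qed.

Lemma inj_surj_bij (T : choiceType) (U : eqType) (f : T -> U) :
  injective f -> (forall y, exists x, f x = y) -> bijective f.
Proof.
move=> f_inj f_surj.
have f_surjb y : exists x, f x == y by have [x <-] := f_surj y; exists x.
exists (fun y => xchoose (f_surjb y)) => [x | y].
  by apply: f_inj; apply/eqP/(xchooseP (f_surjb (f x))).
exact/eqP/(xchooseP (f_surjb y)).
Qed.

Lemma bij_of_triangle (X Y Z : Type) (p : X -> Z) (q : Y -> Z) (h : X -> Y) :
  bijective p -> bijective q -> q \o h =1 p -> bijective h.
Proof.
move=> p_bij [q' qK q'K] qh.
have q'_bij : bijective q' by exists q.
apply: (eq_bij (bij_comp q'_bij p_bij)) => x /=.
by rewrite -qh /= qK.
Qed.

Section DGHomAdditive.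
Variables (R S : DGR01) (f : DGHom R S).

Lemma dd_0 : dd R 0 = 0.
Proof. exact: raddf0_of_morphD (@dd_add R). Qed.

Lemma dd_sub : {morph dd R : x y / x - y}.
Proof. exact: raddfB_of_morphD (@dd_add R). Qed.

Lemma hom0_0 : hom0 f 0 = 0.
Proof. exact: raddf0_of_morphD (hom0_add f). Qed.

Lemma hom0_sub : {morph hom0 f : a b / a - b}.
Proof. exact: raddfB_of_morphD (hom0_add f). Qed.

Lemma hom1_sub : {morph hom1 f : x y / x - y}.
Proof. exact: raddfB_of_morphD (hom1_add f). Qed.

End DGHomAdditive.

Lemma DGHom_inverse (R S : DGR01) (f : DGHom R S) :
  bijective (hom0 f) -> bijective (hom1 f) ->
  exists g : DGHom S R,
    DGHom_eq (DGHom_comp g f) (DGHom_id R) /\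
    DGHom_eq (DGHom_comp f g) (DGHom_id S).
Proof.
move=> [g0 g0K Kg0] [g1 g1K Kg1].
have f0_inj := can_inj g0K; have f1_inj := can_inj g1K.
have g0_one : g0 1 = 1 by apply: f0_inj; rewrite Kg0 hom0_one.
have g0_add a b : g0 (a + b) = g0 a + g0 b.
  by apply: f0_inj; rewrite hom0_add !Kg0.
have g0_mul a b : g0 (a * b) = g0 a * g0 b.
  by apply: f0_inj; rewrite hom0_mul !Kg0.
have g1_add x y : g1 (x + y) = g1 x + g1 y.
  by apply: f1_inj; rewrite hom1_add !Kg1.
have g1_scale r x : g1 (r *: x) = g0 r *: g1 x.
  by apply: f1_inj; rewrite hom1_scale Kg0 !Kg1.
have g_dd x : dd R (g1 x) = g0 (dd S x).
  by apply: f0_inj; rewrite -hom_dd !Kg1 Kg0.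
by exists (Build_DGHom g0_one g0_add g0_mul g1_add g1_scale g_dd).
Qed.

Section DegreeZeroBijective.
Variables (R S T : DGR01) (f : DGHom R S) (g : DGHom S T) (e : DGHom R T).
Hypothesis gf0 : forall r, hom0 g (hom0 f r) = hom0 e r.
Hypothesis gf1 : forall x, hom1 g (hom1 f x) = hom1 e x.
Hypotheses (g_qi : quasi_iso g) (e_qi : quasi_iso e).
Hypothesis f1_bij : bijective (hom1 f).

Lemma dd_hom1_eq0 x : dd S (hom1 f x) = 0 -> dd R x = 0.
Proof.
move=> dfx0; have [g1_inj _] := g_qi; have [_ [e1_surj _]] := e_qi.
have : dd T (hom1 g (hom1 f x)) = 0 by rewrite hom_dd dfx0 hom0_0.
rewrite gf1 => /e1_surj [x0 [dx0 ex0]].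
suff -> : x = x0 by [].
apply: (bij_inj f1_bij); apply/eqP; rewrite -subr_eq0 -hom1_sub; apply/eqP.
apply: g1_inj; first by rewrite hom1_sub dd_sub dfx0 hom_dd dx0 hom0_0 subrr.
by rewrite !hom1_sub !gf1 ex0 subrr.
Qed.

Lemma hom0_injective : injective (hom0 f).
Proof.
move=> a b fab; have [_ [_ [e0_inj _]]] := e_qi.
apply/eqP; rewrite -subr_eq0; apply/eqP.
have fab0 : hom0 f (a - b) = 0 by rewrite hom0_sub fab subrr.
have [x dx] : exists x, a - b = dd R x.
  by apply: e0_inj; exists 0; rewrite -gf0 fab0 hom0_0 dd_0.
by rewrite dx; apply: dd_hom1_eq0; rewrite hom_dd -dx fab0.
Qed.

Lemma hom0_surjective s : exists r, hom0 f r = s.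
Proof.
have [_ [_ [g0_inj _]]] := g_qi; have [_ [_ [_ e0_surj]]] := e_qi.
have [r [y gs]] := e0_surj (hom0 g s).
have [y' dy'] : exists y', s - hom0 f r = dd S y'.
  by apply: g0_inj; exists y; rewrite hom0_sub gf0 gs addrC addKr.
have [f1inv _ f1invK] := f1_bij.
exists (r + dd R (f1inv y')).
by rewrite hom0_add -hom_dd f1invK -dy' addrC subrK.
Qed.

Lemma hom0_bijective : bijective (hom0 f).
Proof. exact: inj_surj_bij hom0_injective hom0_surjective. Qed.

End DegreeZeroBijective.

Section CorrespondenceMorphisms.
Variables (A B : DGR01) (C C' : Corr A B).

Lemma corr_mor_hom1_bijective (h : DGHom (apex C) (apex C')) :
  admissible C -> admissible C' -> corr_mor h -> bijective (hom1 h).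
Proof.
move=> [_ pC_bij] [_ pC'_bij] [[_ /= hf1] [_ /= hg1]].
by apply: bij_of_triangle pC_bij pC'_bij _ => x /=; rewrite hf1 hg1.
Qed.

Lemma corr_mor_inverse (h : DGHom (apex C) (apex C'))
    (h' : DGHom (apex C') (apex C)) :
  corr_mor h -> DGHom_eq (DGHom_comp h h') (DGHom_id (apex C')) ->
  corr_mor h'.
Proof.
move=> [[/= hf0 hf1] [/= hg0 hg1]] [/= hh'0 hh'1].
by split; split=> a /=; rewrite -?hf0 -?hf1 -?hg0 -?hg1 ?hh'0 ?hh'1.
Qed.

End CorrespondenceMorphisms.

Theorem lemma4p2p4 (A B : DGR01) (C C' : Corr A B)
  (h : DGHom (apex C) (apex C')) :
  admissible C -> admissible C' -> corr_mor h ->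
  exists h' : DGHom (apex C') (apex C),
    corr_mor h' /\
    DGHom_eq (DGHom_comp h' h) (DGHom_id (apex C)) /\
    DGHom_eq (DGHom_comp h h') (DGHom_id (apex C')).
Proof.
move=> C_adm C'_adm h_mor.
have h1_bij := corr_mor_hom1_bijective C_adm C'_adm h_mor.
have h0_bij : bijective (hom0 h).
  exact: hom0_bijective h_mor.1.1 h_mor.1.2 C'_adm.1 C_adm.1 h1_bij.
have [h' [h'h hh']] := DGHom_inverse h0_bij h1_bij.
by exists h'; split; [exact: corr_mor_inverse h_mor hh' | split].
Qed.
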